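(* Let $m\ge0$. Let $B_m(\mathbb C)$ (resp. $B_m(\mathbb R)$) act on the space $\mathrm{Her}_m(\mathbb C)$ of $m\times m$ Hermitian matrices (resp. the space $\mathrm{Sym}_m(\mathbb R)$ of real symmetric matrices) by $b\cdot z=bzb^*$ (resp. $b\cdot z=bzb^t$). Then the maps $\tau\mapsto B_m(\mathbb C)\cdot\tau$ and $\tau\mapsto B_m(\mathbb R)\cdot\tau$ are bijections $$\mathrm{SPI}^+_m\xrightarrow{\sim}B_m(\mathbb C)\backslash\mathrm{Her}_m(\mathbb C),\qquad \mathrm{SPI}^+_m\xrightarrow{\sim}B_m(\mathbb R)\backslash\mathrm{Sym}_m(\mathbb R);$$ i.e. $\mathrm{SPI}^+_m$ is a complete system of representatives for both orbit spaces.
   Context: $B_m(\mathbb C)$, $B_m(\mathbb R)$ denote the groups of invertible upper triangular complex, resp. real, $m\times m$ matrices. A signed partial permutation is an $m\times m$ integer matrix with entries in $\{-1,0,1\}$ and at most one nonzero entry in each row and in each column. $\mathrm{SPI}_m$ (signed partial involutions) is the set of symmetric signed partial permutations, and $\mathrm{SPI}^+_m\subset\mathrm{SPI}_m$ is the subset of those whose off-diagonal entries are all nonnegative. *)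

(* The reals are an arbitrary [R : realType] (complete
   archimedean ordered field, i.e. R up to iso); C := R[i] (real_closed's complex). *)
From HB Require Import structures.
From mathcomp Require Import all_boot all_order all_algebra.
From mathcomp Require Import reals.
From mathcomp Require Import complex.
Set Implicit Arguments. Unset Strict Implicit. Unset Printing Implicit Defensive.
Import Order.TTheory GRing.Theory Num.Theory.
Local Open Scope ring_scope.

Definition borel (F : comUnitRingType) (m : nat) (b : 'M[F]_m) : Prop :=
  (forall i j : 'I_m, (j < i)%N -> b i j = 0) /\ b \in unitmx.

Definition signed_partial_perm (m : nat) (t : 'M[int]_m) : Prop :=
  (forall i j : 'I_m, t i j \in [:: -1; 0; 1]) /\
  (forall i j j' : 'I_m, t i j != 0 -> t i j' != 0 -> j = j') /\
  (forall i i' j : 'I_m, t i j != 0 -> t i' j != 0 -> i = i').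

Definition SPI (m : nat) (t : 'M[int]_m) : Prop :=
  signed_partial_perm t /\ t^T = t.

Definition SPIplus (m : nat) (t : 'M[int]_m) : Prop :=
  SPI t /\ (forall i j : 'I_m, i != j -> 0 <= t i j).

Definition adjC (R : rcfType) (m n : nat) (A : 'M[R[i]]_(m, n)) : 'M[R[i]]_(n, m) :=
  (map_mx (@conjc R) A)^T.

Definition is_hermitianC (R : rcfType) (m : nat) (z : 'M[R[i]]_m) : Prop :=
  adjC z = z.

Definition real_symmetric (R : realType) (m : nat) (z : 'M[R]_m) : Prop :=
  z^T = z.

Definition intmx (F : pzRingType) (m : nat) (t : 'M[int]_m) : 'M[F]_m :=
  map_mx (fun k : int => k%:~R) t.

Definition actC (R : rcfType) (m : nat) (b z : 'M[R[i]]_m) := b *m z *m adjC b.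
Definition actR (R : realType) (m : nat) (b z : 'M[R]_m) := b *m z *m b^T.

Definition same_orbitC (R : rcfType) (m : nat) (x y : 'M[R[i]]_m) : Prop :=
  exists b, borel b /\ actC b x = y.
Definition same_orbitR (R : realType) (m : nat) (x y : 'M[R]_m) : Prop :=
  exists b, borel b /\ actR b x = y.

From HB Require Import structures.
From mathcomp Require Import all_boot all_order all_algebra.
From mathcomp Require Import reals.
From mathcomp Require Import complex.
Set Implicit Arguments. Unset Strict Implicit. Unset Printing Implicit Defensive.
Import Order.TTheory GRing.Theory Num.Theory.
Local Open Scope ring_scope.

(* Write a hermitian matrix as [[d, w^*], [w, A]].  By induction an upper
   triangular B brings A to an SPI^+ matrix S, and conjugating by diag(1, B)
   replaces w by B w.  As S^2 is the projection onto the nonzero rows of S, a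
   shear [[1, r], [0, 1]] clears w on those rows; if some entry survives, let k
   be the largest such index: row and column k of S vanish, so an upper
   unitriangular matrix fixing S clears the entries of w above k.  A final
   shear and scaling make the first row and column (s, 0) with s in {0, 1, -1},
   or (0, e_k).  For uniqueness, conjugating [[d1, w1^*], [w1, A]] by
   [[a, r], [0, B]] yields the column B w1 a^* + B A r^*, whose entries on the
   zero rows of A are those of B w1 a^*, since B A B^* = A; comparing them, and
   d2 = a d1 a^* when both columns vanish, forces d1 = d2 and w1 = w2. *)

Lemma sign_pmul_eq (R : numDomainType) (s t p : R) :
  s \in [:: 0; 1; -1] -> t \in [:: 0; 1; -1] -> 0 < p -> t = s * p -> t = s.
Proof.
rewrite !inE => /or3P[]/eqP-> /or3P[]/eqP-> p0; rewrite ?mul0r ?mul1r ?mulN1r // => ep.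
all: move: p0.
- by rewrite -ep ltxx.
- by rewrite -ep oppr_gt0 ltr10.
- by rewrite -[p]opprK -ep oppr0 ltxx.
- by rewrite -[p]opprK -ep oppr_gt0 ltr10.
Qed.

Lemma invmx_ublock (R : comUnitRingType) n1 n2 (A : 'M[R]_n1) r (B : 'M[R]_n2) :
  A \in unitmx -> B \in unitmx ->
  invmx (block_mx A r 0 B) =
    block_mx (invmx A) (- (invmx A *m r *m invmx B)) 0 (invmx B).
Proof.
move=> uA uB; have uAB : block_mx A r 0 B \in unitmx.
  by rewrite unitmxE det_ublock unitrM -!unitmxE uA uB.
rewrite -[RHS](mulKmx uAB) mulmx_block !mulmx0 !mul0mx !addr0 add0r.
by rewrite !mulmxV // mulmxN !mulmxA mulmxV // mul1mx addNr -scalar_mx_block mulmx1.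
Qed.

Section Borel.
Variable F : fieldType.

Lemma borelE n (b : 'M[F]_n) : borel b <-> is_trig_mx b^T /\ b \in unitmx.
Proof.
rewrite /borel; split=> -[tb ub]; split=> //.
  by apply/is_trig_mxP=> i j lt_ij; rewrite mxE tb.
by move=> i j lt_ji; have /is_trig_mxP/(_ j i lt_ji) := tb; rewrite mxE.
Qed.

Lemma borel_mx11 (a : 'M[F]_1) : borel a <-> a \in unitmx.
Proof. by rewrite borelE mx11_is_trig; split=> [[]|]. Qed.

Lemma borel_dlsubmx n1 n2 (b : 'M[F]_(n1 + n2)) : borel b -> dlsubmx b = 0.
Proof.
case/borelE=> /(ursubmx_trig (leqnn n1)); rewrite -trmx_dlsub => /eqP.
by rewrite trmx_eq0 => /eqP.
Qed.

Lemma borel_ublock n1 n2 (A : 'M[F]_n1) r (B : 'M[F]_n2) :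
  borel (block_mx A r 0 B) <-> borel A /\ borel B.
Proof.
rewrite !borelE tr_block_mx is_trig_block_mx // trmx0 eqxx.
rewrite unitmxE det_ublock unitrM -!unitmxE.
by split=> [[/and3P[_ tA tB] /andP[uA uB]] | [[tA uA] [tB uB]]]; rewrite ?tA ?tB ?uA ?uB.
Qed.

Lemma borel_diag n (b : 'M[F]_n) i : borel b -> b i i != 0.
Proof.
case/borelE=> tb; rewrite unitmxE unitfE -det_tr det_trig // => /prodf_neq0.
by move/(_ i isT); rewrite mxE.
Qed.

Lemma borel1 n : borel (1%:M : 'M[F]_n).
Proof. by apply/borelE; rewrite tr_scalar_mx scalar_mx_is_trig unitmx1. Qed.

Lemma borelM n (b c : 'M[F]_n) : borel b -> borel c -> borel (b *m c).
Proof.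
case=> tb ub [tc uc]; split; last by rewrite unitmx_mul ub uc.
move=> i j lt_ji; rewrite mxE big1 // => k _.
have [lt_ki | le_ik] := ltnP k i; first by rewrite tb ?mul0r.
by rewrite tc ?mulr0 // (leq_trans lt_ji le_ik).
Qed.

Lemma borelV n (b : 'M[F]_n) : borel b -> borel (invmx b).
Proof.
elim: n b => [|n IH] b bb; first by split; [case | rewrite unitmx_inv; case: bb].
move: b bb; rewrite -[n.+1]/(1 + n) => b bb.
have dl0 := borel_dlsubmx bb; rewrite -[b]submxK dl0 in bb *.
have [/borel_mx11 ua bB] := proj1 (borel_ublock _ _ _) bb.
rewrite invmx_ublock ?bB.2 //; apply/borel_ublock; split; last exact: IH.
by apply/borel_mx11; rewrite unitmx_inv.
Qed.

End Borel.

Section Adjoint.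
Variables (F : fieldType) (cj : {rmorphism F -> F}).
Hypothesis cjK : involutive cj.

Definition adj m n (A : 'M[F]_(m, n)) : 'M[F]_(n, m) := (map_mx cj A)^T.

Lemma adjK m n : cancel (@adj m n) (@adj n m).
Proof. by move=> A; apply/matrixP=> i j; rewrite !mxE cjK. Qed.

Lemma adjM m n p (A : 'M[F]_(m, n)) (B : 'M[F]_(n, p)) : adj (A *m B) = adj B *m adj A.
Proof. by rewrite /adj map_mxM trmx_mul. Qed.

Lemma adjD m n (A B : 'M[F]_(m, n)) : adj (A + B) = adj A + adj B.
Proof. by apply/matrixP=> i j; rewrite !mxE rmorphD. Qed.

Lemma adjN m n (A : 'M[F]_(m, n)) : adj (- A) = - adj A.
Proof. by apply/matrixP=> i j; rewrite !mxE rmorphN. Qed.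

Lemma adjZ m n a (A : 'M[F]_(m, n)) : adj (a *: A) = cj a *: adj A.
Proof. by apply/matrixP=> i j; rewrite !mxE rmorphM. Qed.

Lemma adj0 m n : adj (0 : 'M[F]_(m, n)) = 0.
Proof. by rewrite /adj map_mx0 trmx0. Qed.

Lemma adj_scalar n a : adj (a%:M : 'M[F]_n) = (cj a)%:M.
Proof. by rewrite /adj map_scalar_mx tr_scalar_mx. Qed.

Lemma adj1 n : adj (1%:M : 'M[F]_n) = 1%:M.
Proof. by rewrite adj_scalar rmorph1. Qed.

Lemma adj_delta m n (i : 'I_m) (j : 'I_n) : adj (delta_mx i j) = delta_mx j i.
Proof. by rewrite /adj map_delta_mx trmx_delta. Qed.

Lemma adj_block m1 m2 n1 n2 (a : 'M[F]_(m1, n1)) (b : 'M[F]_(m1, n2))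
  (c : 'M[F]_(m2, n1)) (d : 'M[F]_(m2, n2)) :
  adj (block_mx a b c d) = block_mx (adj a) (adj c) (adj b) (adj d).
Proof. by rewrite /adj map_block_mx tr_block_mx. Qed.

Definition hblock n (d : 'M[F]_1) (w : 'cV[F]_n) (A : 'M[F]_n) : 'M[F]_(1 + n) :=
  block_mx d (adj w) w A.

Lemma hermitian_submx n (z : 'M[F]_(1 + n)) : adj z = z ->
  [/\ z = hblock (ulsubmx z) (dlsubmx z) (drsubmx z),
      adj (ulsubmx z) = ulsubmx z & adj (drsubmx z) = drsubmx z].
Proof.
move=> hz; have := hz; rewrite -{1 2}[z]submxK adj_block.
by case/eq_block_mx=> hul hur _ hdr; split=> //; rewrite /hblock hur submxK.
Qed.

Lemma adj_hblock n d w (A : 'M[F]_n) :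
  adj (hblock d w A) = hblock (adj d) w (adj A).
Proof. by rewrite /hblock adj_block adjK. Qed.

Lemma conj_hblock n a r (B : 'M[F]_n) d w A : adj A = A ->
  block_mx a r 0 B *m hblock d w A *m adj (block_mx a r 0 B) =
  hblock ((a *m d + r *m w) *m adj a + (a *m adj w + r *m A) *m adj r)
         (B *m w *m adj a + B *m A *m adj r) (B *m A *m adj B).
Proof.
move=> hA; rewrite /hblock adj_block adj0 !mulmx_block !mul0mx !add0r ?mulmx0 ?addr0.
by congr block_mx; rewrite add0r // adjD !adjM !adjK hA !mulmxA mulmxDl.
Qed.

Definition same_orbit n (x y : 'M[F]_n) := exists b, borel b /\ b *m x *m adj b = y.

Lemma same_orbit_refl n (x : 'M[F]_n) : same_orbit x x.
Proof. by exists 1%:M; rewrite mul1mx adj1 mulmx1; split=> //; apply: borel1. Qed.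

Lemma same_orbit_trans n (x y z : 'M[F]_n) :
  same_orbit x y -> same_orbit y z -> same_orbit x z.
Proof.
move=> [b [bb <-]] [c [bc <-]]; exists (c *m b); split; first exact: borelM.
by rewrite adjM !mulmxA.
Qed.

Lemma same_orbit_sym n (x y : 'M[F]_n) : same_orbit x y -> same_orbit y x.
Proof.
move=> [b [bb <-]]; exists (invmx b); split; first exact: borelV.
have ub := bb.2.
by rewrite !mulmxA mulVmx // mul1mx -mulmxA -adjM mulVmx // adj1 mulmx1.
Qed.

Lemma same_orbit_hermitian n (x y : 'M[F]_n) :
  same_orbit x y -> adj x = x -> adj y = y.
Proof. by move=> [b [_ <-]] hx; rewrite !adjM adjK hx mulmxA. Qed.

Lemma hermitian_hblock n d w (A : 'M[F]_n) :
  adj (hblock d w A) = hblock d w A <-> adj d = d /\ adj A = A.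
Proof.
rewrite adj_hblock //; split=> [/eq_block_mx[-> _ _ ->] // | [-> ->] //].
Qed.

Lemma same_orbit_hblock_dr n d w (A : 'M[F]_n) B : borel B -> adj A = A ->
  same_orbit (hblock d w A) (hblock d (B *m w) (B *m A *m adj B)).
Proof.
move=> bB hA; exists (block_mx 1%:M 0 0 B); split.
  by apply/borel_ublock; split=> //; apply: borel1.
by rewrite conj_hblock // !adj0 !adj1 !mulmx0 !mul0mx !mulmx1 !mul1mx !addr0.
Qed.

Lemma same_orbit_shear n d w (A : 'M[F]_n) (r : 'rV_n) : adj A = A ->
  same_orbit (hblock d w A)
    (hblock (d + r *m w + adj (r *m w) + r *m A *m adj r) (w + A *m adj r) A).
Proof.
move=> hA; exists (block_mx 1%:M r 0 1%:M); split.
  by apply/borel_ublock; split; apply: borel1.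
by rewrite conj_hblock // !adj1 !mulmx1 !mul1mx adjM mulmxDl !addrA.
Qed.

Lemma same_orbit_scale n d w (A : 'M[F]_n) a : a != 0 -> adj A = A ->
  same_orbit (hblock d w A) (hblock ((a * cj a) *: d) (cj a *: w) A).
Proof.
move=> a0 hA; exists (block_mx a%:M 0 0 1%:M); split.
  apply/borel_ublock; split; last exact: borel1.
  by apply/borel_mx11; rewrite unitmxE det_scalar1 unitfE.
rewrite conj_hblock // adj_scalar adj0 !adj1 !mulmx0 !mul0mx !addr0 !mulmx1 !mul1mx.
by rewrite mul_scalar_mx !mul_mx_scalar scalerA mulrC.
Qed.

Lemma adj_mx11 (d : 'M[F]_1) : adj d = d -> cj (d 0 0) = d 0 0.
Proof. by move/matrixP/(_ 0 0); rewrite !mxE. Qed.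

Lemma collapse_column n (S : 'M[F]_n) (u : 'cV[F]_n) k :
    row k S = 0 -> col k S = 0 ->
    (forall i : 'I_n, (k < i)%N -> u i 0 = 0) -> u k 0 != 0 ->
  exists2 C, borel C & C *m S *m adj C = S /\ C *m u = u k 0 *: delta_mx k 0.
Proof.
move=> Sk0 Sk0' uk uk0.
pose x : 'cV[F]_n := \col_i (if (i < k)%N then u i 0 / u k 0 else 0).
pose N := x *m delta_mx 0 k.
have NN : N *m N = 0.
  have xk : delta_mx 0 k *m x = 0 :> 'M_1.
    by rewrite -rowE; apply/rowP=> j; rewrite !mxE ltnn.
  by rewrite mulmxA -(mulmxA x) xk mulmx0 mul0mx.
exists (1%:M - N).
  have inv : (1%:M - N) *m (1%:M + N) = 1%:M.
    by rewrite mulmxDr mulmx1 mulmxBl mul1mx NN subr0 subrK.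
  split; last by case: (mulmx1_unit inv).
  move=> i j lt_ji; have /negbTE nij : i != j.
    by apply: contraTneq lt_ji => ->; rewrite ltnn.
  rewrite !mxE big_ord1 !mxE nij sub0r /=.
  case: eqP => [ejk | _]; last by rewrite mulr0 oppr0.
  by rewrite -ejk ltnNge (ltnW lt_ji) mul0r oppr0.
split.
  have NS : N *m S = 0 by rewrite -mulmxA -rowE Sk0 mulmx0.
  have SN : S *m adj N = 0 by rewrite adjM adj_delta mulmxA -colE Sk0' mul0mx.
  by rewrite mulmxBl mul1mx NS subr0 adjD adjN adj1 mulmxBr mulmx1 SN subr0.
have Nu : N *m u = u k 0 *: x.
  by rewrite -mulmxA -rowE [row k u]mx11_scalar mul_mx_scalar mxE.
apply/colP=> i; rewrite mulmxBl mul1mx Nu !mxE eqxx andbT -val_eqE /=.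
have [ik | ki | /val_inj ->] := ltngtP i k.
- by rewrite mulr0 mulrC divfK // subrr.
- by rewrite mulr0 subr0 uk.
- by rewrite mulr0 subr0 mulr1.
Qed.

Lemma row0_conj n (A B : 'M[F]_n) k : B \in unitmx -> B *m A *m adj B = A ->
  row k A = 0 -> row k (B *m A) = 0.
Proof.
move=> uB eA Ak0; have -> : B *m A = A *m adj (invmx B).
  by rewrite -{2}eA -mulmxA -adjM mulVmx // adj1 mulmx1.
by rewrite row_mul Ak0 mul0mx.
Qed.

End Adjoint.

Section SpiPlus.
Variable F : numFieldType.

Definition spi_plus n (S : 'M[F]_n) :=
  [/\ forall i j, S i j = 0 \/ S i j = 1 \/ (i = j /\ S i j = -1),
      forall i j j', S i j != 0 -> S i j' != 0 -> j = j' & S^T = S].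

Definition normal_column n (S : 'M[F]_n) (d : 'M[F]_1) (w : 'cV[F]_n) :=
  (w = 0 /\ exists2 s, s \in [:: 0; 1; -1] & d = s%:M) \/
  (exists2 k, row k S = 0 & w = delta_mx k 0 /\ d = 0).

Section Facts.
Variables (n : nat) (S : 'M[F]_n).
Hypothesis sS : spi_plus S.

Lemma spi_plus_sym i j : S j i = S i j.
Proof. by case: sS => _ _ /matrixP/(_ i j); rewrite mxE. Qed.

Lemma spi_plus_col i i' j : S i j != 0 -> S i' j != 0 -> i = i'.
Proof. by rewrite -!(spi_plus_sym _ j); case: sS => _ uS _; apply: uS. Qed.

Lemma spi_plus_col0 k : row k S = 0 -> col k S = 0.
Proof.
move/rowP=> Sk0; apply/colP=> i.
by rewrite !mxE spi_plus_sym; have := Sk0 i; rewrite !mxE.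
Qed.

Lemma spi_plus_unit i j : S i j != 0 -> S i j * S i j = 1.
Proof.
by case: sS => vS _ _; case: (vS i j) => [->|[->|[_ ->]]]; rewrite ?eqxx ?mulr1 ?mulrNN ?mulr1.
Qed.

Lemma spi_plus_sqr : S *m S = diag_mx (\row_i (row i S != 0)%:R).
Proof.
apply/matrixP=> i j; rewrite !mxE.
have [Si0|nzi] := eqVneq (row i S) 0.
  by rewrite mul0rn big1 // => l _; move/rowP/(_ l): Si0; rewrite !mxE => ->; rewrite mul0r.
have /existsP[l Sil] : [exists l, S i l != 0].
  apply: contraR nzi => /existsPn Si0; apply/eqP/rowP=> l.
  by rewrite !mxE; apply/eqP/negPn/Si0.
rewrite (bigD1 l) //= big1 ?addr0 => [|l' nl']; last first.
  have [-> | Sil'] := eqVneq (S i l') 0; first by rewrite mul0r.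
  by case: sS => _ uS _; rewrite (uS _ _ _ Sil Sil') eqxx in nl'.
have [<- | nij] := eqVneq i j; first by rewrite (spi_plus_sym i l) spi_plus_unit.
have [-> | Slj] := eqVneq (S l j) 0; first by rewrite mulr0 mulr0n.
by rewrite spi_plus_sym in Slj; rewrite (spi_plus_col Sil Slj) eqxx in nij.
Qed.

End Facts.

End SpiPlus.

Section IntegerMatrices.
Variable F : numFieldType.

Lemma intmx_inj n : injective (@intmx F n).
Proof.
by move=> t1 t2 /matrixP e; apply/matrixP=> i j; have := e i j; rewrite !mxE => /intr_inj.
Qed.

Lemma SPIplus_spi_plus n (tau : 'M[int]_n) : SPIplus tau <-> spi_plus (intmx F tau).
Proof.
have nz i j : (intmx F tau i j != 0) = (tau i j != 0) by rewrite mxE intr_eq0.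
have trE : (intmx F tau)^T = intmx F tau^T by rewrite /intmx map_trmx.
split=> [[[[vt [ut _]] tt] pt] | [vT uT tT]].
  split=> [i j | i j j' | ]; rewrite ?nz ?trE ?tt //; last exact: ut.
  rewrite mxE; have := vt i j; rewrite !inE => /or3P[] /eqP tij; rewrite tij.
  - have [<- | /pt] := eqVneq i j; first by rewrite rmorphN1; auto.
    by rewrite tij.
  - by rewrite rmorph0; auto.
  - by rewrite rmorph1; auto.
have tij i j : tau i j = 0 \/ tau i j = 1 \/ (i = j /\ tau i j = -1).
  have e1 : (1 : F) = (1 : int)%:~R by rewrite mulr1z.
  have eN1 : (-1 : F) = (-1 : int)%:~R by rewrite mulrN1z.
  case: (vT i j) => [|[|[eij]]]; rewrite mxE.
  - by move/eqP; rewrite intr_eq0 => /eqP; auto.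
  - by rewrite e1 => /intr_inj; auto.
  - by rewrite eN1 => /intr_inj; auto.
have sT : spi_plus (intmx F tau) by [].
split; first (split; first split).
- by move=> i j; case: (tij i j) => [|[|[_]]] ->; rewrite !inE eqxx /= ?orbT.
- by split=> [i j j' | i i' j]; rewrite -!nz; [apply: uT | apply: spi_plus_col].
- by apply: intmx_inj; rewrite -trE.
- move=> i j nij; case: (tij i j) => [-> | [-> | [eij _]]] //.
  by rewrite eij eqxx in nij.
Qed.

Lemma spi_plus_intmx n (T : 'M[F]_n) :
  spi_plus T -> exists2 tau, SPIplus tau & intmx F tau = T.
Proof.
move=> sT; pose tau : 'M[int]_n :=
  \matrix_(i, j) (if T i j == 1 then 1 else if T i j == -1 then -1 else 0).
suff Etau : intmx F tau = T by exists tau; rewrite // SPIplus_spi_plus Etau.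
apply/matrixP=> i j; rewrite !mxE; case: sT => vT _ _.
have N11 : (-1 == 1 :> F) = false.
  by apply/negbTE; rewrite -subr_eq0 -opprD oppr_eq0 -mulr2n pnatr_eq0.
case: (vT i j) => [|[|[_]]] ->.
- by rewrite eq_sym oner_eq0 eq_sym oppr_eq0 oner_eq0 mulr0z.
- by rewrite eqxx mulr1z.
- by rewrite N11 eqxx mulrN1z.
Qed.

End IntegerMatrices.

Section NormalForm.
Variables (F : numFieldType) (cj : {rmorphism F -> F}).
Hypothesis cjK : involutive cj.
Local Notation adj := (adj cj).
Local Notation hblock := (hblock cj).
Local Notation same_orbit := (same_orbit cj).

Lemma spi_plus_adj n (S : 'M[F]_n) : spi_plus S -> adj S = S.
Proof.
move=> sS; apply/matrixP=> i j; rewrite !mxE (spi_plus_sym sS).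
case: sS => vS _ _.
by case: (vS i j) => [->|[->|[_ ->]]]; rewrite ?rmorph0 ?rmorph1 ?rmorphN1.
Qed.

Lemma spi_plus_hblock n (S : 'M[F]_n) d w :
  spi_plus S -> normal_column S d w -> spi_plus (hblock d w S).
Proof.
case=> vS uS tS [[-> [s s01 ->]] | [k Sk0 [-> ->]]]; rewrite /hblock ?adj0 ?adj_delta.
- split; last by rewrite tr_block_mx !trmx0 tr_scalar_mx tS.
  + move=> i j; case: (split_ordP i) => i' ->; case: (split_ordP j) => j' ->;
      rewrite ?block_mxEul ?block_mxEur ?block_mxEdl ?block_mxEdr ?mxE; try by left.
      by rewrite !ord1 eqxx mulr1n; move: s01; rewrite !inE => /or3P[] /eqP->; auto.
    by case: (vS i' j') => [->|[->|[-> ->]]]; auto.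
  + move=> i j j'; case: (split_ordP i) => i' ->; case: (split_ordP j) => j0 ->;
      case: (split_ordP j') => j1 ->;
      rewrite ?block_mxEul ?block_mxEur ?block_mxEdl ?block_mxEdr ?mxE ?eqxx //.
      by rewrite !ord1.
    by move=> Sij0 Sij1; rewrite (uS _ _ _ Sij0 Sij1).
- have Sk j : S k j = 0 by move/rowP/(_ j): Sk0; rewrite !mxE.
  split; last by rewrite tr_block_mx !trmx0 !trmx_delta tS.
  + move=> i j; case: (split_ordP i) => i' ->; case: (split_ordP j) => j' ->;
      rewrite ?block_mxEul ?block_mxEur ?block_mxEdl ?block_mxEdr ?mxE; try by left.
    * by case: (_ && _); auto.
    * by case: (_ && _); auto.
    * by case: (vS i' j') => [->|[->|[-> ->]]]; auto.
  + move=> i j j'; case: (split_ordP i) => i' ->; case: (split_ordP j) => j0 ->;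
      case: (split_ordP j') => j1 ->;
      rewrite ?block_mxEul ?block_mxEur ?block_mxEdl ?block_mxEdr ?mxE ?eqxx;
      rewrite ?pnatr_eq0 ?eqb0 ?negbK //=.
    * by move=> /andP[_ /eqP->] /andP[_ /eqP->].
    * by rewrite !ord1.
    * by move=> /andP[/eqP-> _]; rewrite Sk eqxx.
    * by move=> Sij /andP[/eqP ei _]; rewrite ei Sk eqxx in Sij.
    * by move=> Sij0 Sij1; rewrite (uS _ _ _ Sij0 Sij1).
Qed.

Lemma spi_plus_hblock_inv n (M : 'M[F]_(1 + n)) : spi_plus M ->
  spi_plus (drsubmx M) /\ normal_column (drsubmx M) (ulsubmx M) (dlsubmx M).
Proof.
move=> sM; have [vM uM tM] := sM; pose l0 := lshift n (0 : 'I_1).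
split.
  split; last by rewrite trmx_drsub tM.
  - move=> i j; rewrite !mxE.
    by case: (vM (rshift 1 i) (rshift 1 j)) => [->|[->|[/rshift_inj -> ->]]]; auto.
  - by move=> i j j'; rewrite !mxE => Mij Mij'; apply/rshift_inj/(uM _ _ _ Mij Mij').
have [k Mk | M0] := pickP (fun k => M (rshift 1 k) l0 != 0); last first.
  left; split.
    by apply/matrixP=> i b; rewrite ord1 !mxE; have /negbFE/eqP := M0 i.
  exists (M l0 l0); last by rewrite [LHS]mx11_scalar !mxE.
  by rewrite !inE; case: (vM l0 l0) => [|[|[_]]] ->; rewrite eqxx ?orbT.
right; exists k.
  apply/rowP=> j; rewrite !mxE; apply/eqP; apply: contraT => Mkj.
  by have /eqP := uM _ _ _ Mk Mkj; rewrite eq_lrshift.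
have Mk1 : M (rshift 1 k) l0 = 1.
  case: (vM (rshift 1 k) l0) => [Mk0|[//|[/eqP]]]; last by rewrite eq_rlshift.
  by rewrite Mk0 eqxx in Mk.
split.
  apply/matrixP=> i b; rewrite ord1 !mxE eqxx andbT.
  have [-> | nik] := eqVneq i k; first by rewrite Mk1.
  apply/eqP; apply: contraT => Mi.
  by rewrite (rshift_inj (spi_plus_col sM Mi Mk)) eqxx in nik.
apply/matrixP=> a b; rewrite !ord1 !mxE; have [// | M00] := eqVneq (M l0 l0) 0.
have Mk' : M l0 (rshift 1 k) != 0 by rewrite (spi_plus_sym sM).
by have /eqP := uM _ _ _ M00 Mk'; rewrite eq_lrshift.
Qed.

Hypothesis cj_normalize : forall x, cj x = x -> x != 0 ->
  exists s, s * x * cj s \in [:: 1; -1].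

Lemma normal_form_hblock0 n (S : 'M[F]_n) d : spi_plus S -> adj d = d ->
  exists2 T, spi_plus T & same_orbit (hblock d 0 S) T.
Proof.
move=> sS /adj_mx11 hd; rewrite [d]mx11_scalar.
have [-> | d0] := eqVneq (d 0 0) 0.
  exists (hblock 0%:M 0 S); last exact: same_orbit_refl.
  by apply: spi_plus_hblock => //; left; split=> //; exists 0; rewrite ?inE ?eqxx.
have [s hs] := cj_normalize hd d0.
have s0 : s != 0.
  by apply: contraTneq hs => ->; rewrite !mul0r !inE eq_sym oner_eq0 eq_sym oppr_eq0 oner_eq0.
exists (hblock ((s * cj s) *: (d 0 0)%:M) (cj s *: 0) S).
  apply: spi_plus_hblock => //; left; rewrite scaler0; split=> //.
  exists (s * d 0 0 * cj s); first by move: hs; rewrite !inE => /orP[] ->; rewrite ?orbT.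
  by rewrite scale_scalar_mx mulrAC.
by apply: same_orbit_scale => //; apply: spi_plus_adj.
Qed.

Lemma same_orbit_hblock_delta n (S : 'M[F]_n) d k c :
    spi_plus S -> row k S = 0 -> c != 0 -> adj d = d ->
  same_orbit (hblock d (c *: delta_mx k 0) S) (hblock 0 (delta_mx k 0) S).
Proof.
move=> sS Sk0 c0 /adj_mx11 hd; have hS := spi_plus_adj sS.
have d00 : delta_mx 0 0 = 1%:M :> 'M[F]_1 by rewrite [LHS]mx11_scalar mxE.
(* g c = - d / 2, so the sheared corner d + g c + cj (g c) vanishes. *)
pose g := - (d 0 0 / 2) / c; pose r : 'rV[F]_n := g *: delta_mx 0 k.
apply: (same_orbit_trans (same_orbit_shear cjK _ _ r hS)).
have -> : r *m (c *: delta_mx k 0) = (- (d 0 0 / 2))%:M.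
  by rewrite -scalemxAl -scalemxAr mul_delta_mx d00 scalerA divfK // scalemx1.
have -> : r *m S = 0 by rewrite -scalemxAl -rowE Sk0 scaler0.
have -> : S *m adj r = 0.
  by rewrite adjZ adj_delta -scalemxAr -colE (spi_plus_col0 sS Sk0) scaler0.
have -> : d + (- (d 0 0 / 2))%:M + adj (- (d 0 0 / 2))%:M + 0 *m adj r = 0.
  rewrite {1}[d]mx11_scalar adj_scalar mul0mx addr0 -!raddfD /=.
  by rewrite rmorphN fmorph_div rmorph_nat hd -addrA -opprD -splitr subrr raddf0.
have ca0 : (cj c)^-1 != 0 by rewrite invr_eq0 fmorph_eq0.
apply: (same_orbit_trans (same_orbit_scale cjK _ _ ca0 hS)).
by rewrite scaler0 addr0 fmorphV cjK scalerA mulVf // scale1r; apply: same_orbit_refl.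
Qed.

Lemma normal_form_hblock n (S : 'M[F]_n) d u : spi_plus S -> adj d = d ->
  exists2 T, spi_plus T & same_orbit (hblock d u S) T.
Proof.
move=> sS hd; have hS := spi_plus_adj sS.
pose u1 := u - S *m (S *m u).
have orb1 := same_orbit_shear cjK d u (- adj (S *m u)) hS.
rewrite adjN (adjK cjK) !mulmxN -/u1 in orb1.
set d1 := (X in same_orbit _ (hblock X _ _)) in orb1.
have [hd1 _] : adj d1 = d1 /\ adj S = S.
  by apply/(hermitian_hblock cjK)/(same_orbit_hermitian cjK orb1)/hermitian_hblock.
have u1S i : row i S != 0 -> u1 i 0 = 0.
  by move=> Si; rewrite /u1 mulmxA spi_plus_sqr // mul_diag_mx !mxE Si mul1r subrr.
have [k0 u1k0 | u10] := pickP (fun i => u1 i 0 != 0); last first.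
  have u1_0 : u1 = 0 by apply/colP=> i; rewrite [RHS]mxE; have /negbFE/eqP := u10 i.
  rewrite u1_0 in orb1; have [T sT orbT] := normal_form_hblock0 sS hd1.
  by exists T; last exact: same_orbit_trans orb1 orbT.
case: (@arg_maxnP _ k0 (fun i => u1 i 0 != 0) (@nat_of_ord n) u1k0) => k u1k maxk.
have Sk0 : row k S = 0 by apply: contraNeq u1k => /u1S ->.
have u1_gt (i : 'I_n) : (k < i)%N -> u1 i 0 = 0.
  by move=> ki; apply/eqP; apply: contraTT ki => /maxk; rewrite -leqNgt.
have [C bC [CSC Cu1]] := collapse_column cj Sk0 (spi_plus_col0 sS Sk0) u1_gt u1k.
have orb2 := same_orbit_hblock_dr cjK d1 u1 bC hS; rewrite Cu1 CSC in orb2.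
exists (hblock 0 (delta_mx k 0) S); first by apply: spi_plus_hblock => //; right; exists k.
apply: same_orbit_trans orb1 (same_orbit_trans orb2 _).
exact: same_orbit_hblock_delta sS Sk0 u1k hd1.
Qed.

Lemma exists_normal_form n (z : 'M[F]_n) : adj z = z ->
  exists2 T, spi_plus T & same_orbit z T.
Proof.
elim: n z => [|n IH] z hz.
  exists z; last exact: same_orbit_refl.
  by split; [case | case | apply/matrixP; case].
move: z hz; rewrite -[n.+1]/(1 + n) => z hz.
have [Ez hd hA] := hermitian_submx hz.
have [S sS [B [bB BAB]]] := IH _ hA.
have orb1 := same_orbit_hblock_dr cjK (ulsubmx z) (dlsubmx z) bB hA.
rewrite BAB -Ez in orb1.
have [T sT orbT] := normal_form_hblock (B *m dlsubmx z) sS hd.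
by exists T; last exact: same_orbit_trans orb1 orbT.
Qed.

Hypothesis cj_norm_gt0 : forall x, x != 0 -> 0 < x * cj x.

Lemma normal_column_unique n (A B : 'M[F]_n) a r d1 d2 w1 w2 :
    borel (block_mx a r 0 B) -> spi_plus A -> B *m A *m adj B = A ->
    normal_column A d1 w1 -> normal_column A d2 w2 ->
    block_mx a r 0 B *m hblock d1 w1 A *m adj (block_mx a r 0 B) = hblock d2 w2 A ->
  d1 = d2 /\ w1 = w2.
Proof.
move=> /borel_ublock[/borel_mx11 ua bB] sA eA c1 c2.
have hA := spi_plus_adj sA; rewrite conj_hblock // => /eq_block_mx[eul _ edl _].
have a0 : a 0 0 != 0 by rewrite -unitfE -det_mx11 -unitmxE.
have col_w2 k : row k A = 0 -> w2 k 0 = cj (a 0 0) * (B *m w1) k 0.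
  move=> Ak0; have rowk (v : 'cV[F]_n) : v k 0 = row k v 0 0 by rewrite mxE.
  rewrite -edl mxE [a]mx11_scalar adj_scalar mul_mx_scalar [X in _ + X]rowk.
  by rewrite row_mul (row0_conj bB.2 eA Ak0) mul0mx !mxE addr0.
have Bjj j : cj (a 0 0) * (B *m (delta_mx j 0 : 'cV_n)) j 0 != 0.
  by rewrite -colE mxE mulf_neq0 ?fmorph_eq0 // borel_diag.
move: eul edl col_w2; case: c1 => [[-> [s1 s1P ->]] | [j Aj0 [-> ->]]];
  case: c2 => [[-> [s2 s2P ->]] | [k Ak0 [-> ->]]] => eul edl col_w2.
- split=> //; f_equal.
  have Ar : A *m adj r = 0.
    move: edl; rewrite mulmx0 mul0mx add0r -mulmxA => /(congr1 (mulmx (invmx B))).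
    by rewrite mulKmx ?bB.2 // mulmx0.
  move: eul; rewrite mulmx0 addr0 adj0 mulmx0 add0r -(mulmxA r) Ar mulmx0 addr0.
  rewrite [a]mx11_scalar adj_scalar -!scalar_mxM => /matrixP/(_ 0 0).
  rewrite !mxE !mulr1n => e; apply/esym/(sign_pmul_eq s1P s2P (cj_norm_gt0 a0)).
  by rewrite -e [a 0 0 * s1]mulrC -mulrA.
- by have := col_w2 k Ak0; rewrite mulmx0 !mxE !eqxx mulr0 => /eqP; rewrite oner_eq0.
- by have := col_w2 j Aj0; rewrite mxE => /esym/eqP; rewrite (negbTE (Bjj j)).
- have := col_w2 j Aj0; rewrite mxE eqxx andbT; case: eqP => [-> // | _] /esym/eqP.
  by rewrite (negbTE (Bjj j)).
Qed.

Lemma normal_form_unique n (b T1 T2 : 'M[F]_n) :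
  borel b -> spi_plus T1 -> spi_plus T2 -> b *m T1 *m adj b = T2 -> T1 = T2.
Proof.
elim: n b T1 T2 => [|n IH] b T1 T2 bb s1 s2; first by move=> _; apply/matrixP=> -[].
move: b T1 T2 bb s1 s2; rewrite -[n.+1]/(1 + n) => b T1 T2 bb s1 s2.
have [E1 _ _] := hermitian_submx (spi_plus_adj s1).
have [E2 _ _] := hermitian_submx (spi_plus_adj s2).
have [sA1 c1] := spi_plus_hblock_inv s1; have [sA2 c2] := spi_plus_hblock_inv s2.
have bb' := bb; rewrite -[b]submxK (borel_dlsubmx bb) in bb' *.
have bB := (proj1 (borel_ublock _ _ _) bb').2.
have hA1 := spi_plus_adj sA1.
rewrite E1 E2 => E; have := E; rewrite conj_hblock // => /eq_block_mx[_ _ _ eA].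
have eA1 := IH _ _ _ bB sA1 sA2 eA; rewrite -eA1 in c2 eA E *.
by have [-> ->] := normal_column_unique bb' sA1 eA c1 c2 E.
Qed.

Theorem SPIplus_orbit_representatives m :
  [/\ forall tau : 'M[int]_m, SPIplus tau -> adj (intmx F tau) = intmx F tau,
      forall z : 'M[F]_m, adj z = z ->
        exists tau, SPIplus tau /\ same_orbit (intmx F tau) z &
      forall tau1 tau2 : 'M[int]_m, SPIplus tau1 -> SPIplus tau2 ->
        same_orbit (intmx F tau1) (intmx F tau2) -> tau1 = tau2].
Proof.
split=> [tau /SPIplus_spi_plus /spi_plus_adj // | z hz | tau1 tau2 s1 s2 [b [bb E]]].
  have [T /spi_plus_intmx[tau stau <-] orb] := exists_normal_form hz.
  by exists tau; split; last exact: same_orbit_sym.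
apply: intmx_inj (normal_form_unique bb _ _ E); exact/SPIplus_spi_plus.
Qed.

End NormalForm.

Lemma rcf_normalize (R : rcfType) (a : R) :
  a != 0 -> exists t, t * a * t \in [:: 1; -1].
Proof.
move=> a0; exists (Num.sqrt `|a|^-1).
rewrite mulrAC -expr2 sqr_sqrtr ?invr_ge0 // !inE.
have [an | ap | a_eq0] := ltrgtP a 0; last by rewrite a_eq0 eqxx in a0.
- by rewrite ltr0_norm // invrN mulNr mulVf ?eqxx ?orbT // lt_eqF.
- by rewrite gtr0_norm // mulVf ?eqxx.
Qed.

Lemma real_norm_gt0 (R : realDomainType) (x : R) : x != 0 -> 0 < x * x.
Proof. by move=> x0; rewrite -expr2 exprn_even_gt0 // x0 orbT. Qed.

Section Instances.
Variable R : rcfType.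

Lemma conjc_norm_gt0 (x : R[i]) : x != 0 -> 0 < x * conjc x.
Proof. by move=> x0; rewrite -sqr_normc exprn_gt0 // normr_gt0. Qed.

Lemma conjc_normalize (x : R[i]) : conjc x = x -> x != 0 ->
  exists s, s * x * conjc s \in [:: 1; -1].
Proof.
case: x => a b /= [/eqP]; rewrite eqNr => /eqP -> x0.
have [t ht] : exists t, t * a * t \in [:: 1; -1].
  by apply: rcf_normalize; apply: contraNneq x0 => ->.
exists (t%:C)%C; rewrite conjc_real complexr0 -!rmorphM.
move: ht; rewrite !inE => /orP[] /eqP ->; apply/orP; [left | right]; apply/eqP.
- exact: rmorph1.
- exact: rmorphN1.
Qed.

End Instances.

Lemma adj_idfun (R : numFieldType) m n (A : 'M[R]_(m, n)) :
  adj (idfun : {rmorphism R -> R}) A = A^T.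
Proof. by apply/matrixP=> i j; rewrite !mxE. Qed.

Theorem proposition3p14 (R : realType) (m : nat) :
  ((forall tau : 'M[int]_m, SPIplus tau -> is_hermitianC (intmx R[i] tau)) /\
   (forall z : 'M[R[i]]_m, is_hermitianC z ->
      exists tau : 'M[int]_m, SPIplus tau /\ same_orbitC (intmx R[i] tau) z) /\
   (forall tau1 tau2 : 'M[int]_m, SPIplus tau1 -> SPIplus tau2 ->
      same_orbitC (intmx R[i] tau1) (intmx R[i] tau2) -> tau1 = tau2))
  /\
  ((forall tau : 'M[int]_m, SPIplus tau -> real_symmetric (intmx R tau)) /\
   (forall z : 'M[R]_m, real_symmetric z ->
      exists tau : 'M[int]_m, SPIplus tau /\ same_orbitR (intmx R tau) z) /\
   (forall tau1 tau2 : 'M[int]_m, SPIplus tau1 -> SPIplus tau2 ->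
      same_orbitR (intmx R tau1) (intmx R tau2) -> tau1 = tau2)).
Proof.
have [hC eC uC] := SPIplus_orbit_representatives (conjcK (R := R))
  (@conjc_normalize R) (@conjc_norm_gt0 R) m.
have [hR eR uR] := SPIplus_orbit_representatives (cj := idfun) (fun _ => erefl)
  (fun x _ => @rcf_normalize R x) (@real_norm_gt0 R) m.
split; first by split; [|split].
split; [|split].
- by move=> tau /hR; rewrite adj_idfun.
- move=> z hz; have [|tau [stau [b [bb E]]]] := eR z; first by rewrite adj_idfun.
  by exists tau; split=> //; exists b; split=> //; rewrite /actR -adj_idfun.
- by move=> tau1 tau2 s1 s2 [b [bb E]]; apply: uR => //; exists b; rewrite adj_idfun.
Qed.
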